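(* Fix $\sigma\in(0,\tfrac12)$. There exist $\lambda^{*}>0$ and $s^{*}\in(0,1)$ such that: (i) for all $\lambda\in(0,\lambda^{*})$, $\mathcal{I}^1_\lambda=(0,1)$; (ii) for $\lambda=\lambda^{*}$, $\mathcal{I}^1_\lambda=(0,1)\setminus\{s^{*}\}$; (iii) for all $\lambda>\lambda^{*}$ there exist $s_0,s_1\in(0,1)$ with $s_0<s^{*}<s_1$ such that $\mathcal{I}^1_\lambda=(0,s_0)\cup(s_1,1)$.
   Context: Let $g(s)=s^2(1-s)$ and $G(u)=u^3/3-u^4/4$ on $[0,1]$. For $\lambda>0$ and $s\in(0,1)$, let $(\hat u_s,\hat v_s)$ be the unique solution, on its maximal interval of existence, of $u'=v$, $v'=-\lambda g(u)$, $u(1)=s$, $v(1)=0$. Let $\hat T_0(s)$ denote the time taken by $(\hat u_s,\hat v_s)$ to go from $(s,0)$ to the half-line $\{0\}\times(0,+\infty)$ moving backwards in time along the level line $v^2+2\lambda G(u)=2\lambda G(s)$. Set $\mathcal{I}^1_\lambda=\{s\in(0,1):\hat T_0(s)>\sigma\}$. *)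

From Stdlib Require Import Reals Lra.
From Coquelicot Require Import Coquelicot.
Open Scope R_scope.

Definition g (s : R) : R := s ^ 2 * (1 - s).
Definition G (u : R) : R := u ^ 3 / 3 - u ^ 4 / 4.

(* [hatT0_is lam s T]: the solution (u,v) of u' = v, v' = -lam g(u),
   u(1) = s, v(1) = 0, followed backwards in time from t = 1, reaches the
   half-line {0} x (0,+oo) for the first time at time 1 - T, i.e. T is the
   time hat T_0(s).  The ODE is required on [1-T,1] (which lies inside the
   open maximal interval of existence, so two-sided derivatives exist there);
   by uniqueness for this locally Lipschitz system, T is uniquely determined. *)
Definition hatT0_is (lam s T : R) : Prop :=
  0 < T /\
  exists u v : R -> R,
    (forall t, 1 - T <= t <= 1 ->
       is_derive u t (v t) /\ is_derive v t (- lam * g (u t))) /\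
    u 1 = s /\ v 1 = 0 /\
    u (1 - T) = 0 /\ 0 < v (1 - T) /\
    (forall t, 1 - T < t <= 1 -> ~ (u t = 0 /\ 0 < v t)).

Definition I1 (sigma lam s : R) : Prop :=
  0 < s < 1 /\ exists T, hatT0_is lam s T /\ sigma < T.

From Stdlib Require Import Reals Lra Psatz Ranalysis5 ClassicalEpsilon.
From Coquelicot Require Import Coquelicot.
Open Scope R_scope.

(* Along the level line [v^2 + 2 lam G(u) = 2 lam G(s)] through [(s,0)], the
   substitution [u = s (1 - y^2)] turns the travel time into
   [hat T_0(s) = sqrt (2 / lam) H(s)] with [H(s) = int_0^1 dy / sqrt (s Q(s,y))],
   so [s] lies in [I^1_lam] iff [sigma sqrt (lam / 2) < H(s)].  As [s Q(s,y)] is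
   strictly concave in [s] and [x |-> 1 / sqrt x] is convex and decreasing, [H]
   is strictly convex on (0,1); it blows up at both ends, since
   [H(s) >= 1 / sqrt s] and [H(s) >= - ln (sqrt (1 - s))].  Hence [H] decreases
   strictly down to its unique minimiser [m] and then increases strictly, and
   the three regimes are the threshold [sigma sqrt (lam / 2)] lying below, at or
   above [H(m)], i.e. [lam] below, at or above [lam* = 2 (H(m) / sigma)^2].
   That [hat T_0] is well defined rests on backward uniqueness for
   [u'' = - lam g(u)], by a Gronwall argument on [(u1 - u2)^2 + (v1 - v2)^2]. *)

(** * Convex functions on an open interval *)

Section Convexity.
Variables lo hi : R.

Definition convex_on (f : R -> R) : Prop :=
  forall x y t, lo < x < hi -> lo < y < hi -> 0 <= t <= 1 ->
    f (t * x + (1 - t) * y) <= t * f x + (1 - t) * f y.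

Definition strictly_convex_on (f : R -> R) : Prop :=
  forall x y t, lo < x < hi -> lo < y < hi -> x <> y -> 0 < t < 1 ->
    f (t * x + (1 - t) * y) < t * f x + (1 - t) * f y.

Definition unbounded_left (f : R -> R) : Prop :=
  forall M x, lo < x < hi -> exists a, lo < a < x /\ M < f a.

Definition unbounded_right (f : R -> R) : Prop :=
  forall M x, lo < x < hi -> exists b, x < b < hi /\ M < f b.

Record valley (m : R) (f : R -> R) : Prop := {
  valley_mid : lo < m < hi;
  valley_continuous : forall x, lo < x < hi -> continuity_pt f x;
  valley_decreasing : forall x y, lo < x -> x < y <= m -> f y < f x;
  valley_increasing : forall x y, m <= x < y -> y < hi -> f x < f y;
  valley_unbounded_left : unbounded_left f;
  valley_unbounded_right : unbounded_right f }.

Variable f : R -> R.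

Lemma strictly_convex_on_convex_on : strictly_convex_on f -> convex_on f.
Proof.
  intros Hf x y t Hx Hy Ht.
  destruct (Req_dec x y) as [<-|Hxy].
  { replace (t * x + (1 - t) * x) with x by ring. lra. }
  destruct (Req_dec t 0) as [->|Ht0].
  { replace (0 * x + (1 - 0) * y) with y by ring. lra. }
  destruct (Req_dec t 1) as [->|Ht1].
  { replace (1 * x + (1 - 1) * y) with x by ring. lra. }
  left; apply Hf; auto; lra.
Qed.

Section ConvexFunction.
Hypothesis f_convex : convex_on f.

Lemma convex_on_chord p z q : lo < p -> p <= z <= q -> q < hi ->
  f z * (q - p) <= (q - z) * f p + (z - p) * f q.
Proof.
  intros Hp Hz Hq.
  destruct (Req_dec p q) as [<-|Hpq].
  { replace z with p by lra. lra. }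
  set (t := (q - z) / (q - p)).
  assert (Ht : 0 <= t <= 1).
  { split; [apply Rdiv_le_0_compat; lra|]. apply (Rdiv_le_1 (q - z) (q - p)); lra. }
  pose proof (f_convex p q t ltac:(lra) ltac:(lra) Ht) as C.
  replace (t * p + (1 - t) * q) with z in C by (unfold t; field; lra).
  apply (Rmult_le_compat_r (q - p)) in C; [|lra].
  replace ((q - z) * f p + (z - p) * f q)
    with ((t * f p + (1 - t) * f q) * (q - p)) by (unfold t; field; lra).
  exact C.
Qed.

Lemma convex_on_lipschitz_at a x b : lo < a < x -> x < b < hi ->
  exists L, 0 < L /\ forall y, a <= y <= b -> Rabs (f y - f x) <= L * Rabs (y - x).
Proof.
  intros Ha Hb.
  set (A := Rabs (f a - f x) / (x - a)).
  set (B := Rabs (f b - f x) / (b - x)).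
  assert (EA : A * (x - a) = Rabs (f a - f x)) by (unfold A; field; lra).
  assert (EB : B * (b - x) = Rabs (f b - f x)) by (unfold B; field; lra).
  assert (A0 : 0 <= A) by (apply Rdiv_le_0_compat; [apply Rabs_pos | lra]).
  assert (B0 : 0 <= B) by (apply Rdiv_le_0_compat; [apply Rabs_pos | lra]).
  pose proof (Rle_abs (f a - f x)). pose proof (Rle_abs (f b - f x)).
  exists (A + B + 1). split; [lra|]. intros y Hy.
  destruct (Rle_lt_dec y x) as [Hyx|Hxy].
  - pose proof (convex_on_chord a y x ltac:(lra) ltac:(lra) ltac:(lra)).
    pose proof (convex_on_chord y x b ltac:(lra) ltac:(lra) ltac:(lra)).
    assert (f y - f x <= (x - y) * A) by nra.
    assert (f x - f y <= (x - y) * B) by nra.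
    rewrite (Rabs_left1 (y - x)) by lra. apply Rabs_le; split; nra.
  - pose proof (convex_on_chord x y b ltac:(lra) ltac:(lra) ltac:(lra)).
    pose proof (convex_on_chord a x y ltac:(lra) ltac:(lra) ltac:(lra)).
    assert (f y - f x <= (y - x) * B) by nra.
    assert (f x - f y <= (y - x) * A) by nra.
    rewrite (Rabs_right (y - x)) by lra. apply Rabs_le; split; nra.
Qed.

Lemma convex_on_continuity_pt x : lo < x < hi -> continuity_pt f x.
Proof.
  intros Hx.
  destruct (convex_on_lipschitz_at ((lo + x) / 2) x ((x + hi) / 2))
    as (L & HL & Lip); try lra.
  apply continuity_pt_locally. intros eps.
  set (d := Rmin (Rmin ((x - lo) / 2) ((hi - x) / 2)) (eps / L)).
  assert (Hd : 0 < d).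
  { apply Rmin_pos; [apply Rmin_pos; lra|].
    apply Rdiv_lt_0_compat; [apply cond_pos | lra]. }
  exists (mkposreal d Hd). intros y Hy.
  change (Rabs (y - x) < d) in Hy.
  apply Rmin_Rgt in Hy as [Hy Hy3]. apply Rmin_Rgt in Hy as [Hy1 Hy2].
  apply Rabs_def2 in Hy1. apply Rabs_def2 in Hy2.
  apply Rle_lt_trans with (L * Rabs (y - x)); [apply Lip; lra|].
  replace (pos eps) with (L * (eps / L)) by (field; lra).
  apply Rmult_lt_compat_l; lra.
Qed.

Lemma convex_on_argmin a c b : lo < a < c -> c < b < hi ->
  f c <= f a -> f c <= f b ->
  exists m, lo < m < hi /\ forall s, lo < s < hi -> f m <= f s.
Proof.
  intros Ha Hb Hca Hcb.
  destruct (continuity_ab_min f a b) as (m & Hmin & Hm); [lra| |].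
  { intros; apply convex_on_continuity_pt; lra. }
  exists m. split; [lra|]. intros s Hs.
  pose proof (Hmin c ltac:(lra)).
  apply Rnot_lt_le. intros Hsm.
  destruct (Rlt_le_dec s a) as [Hsa|Hsa]; [|destruct (Rle_lt_dec s b) as [Hsb|Hbs]].
  - pose proof (convex_on_chord s a c ltac:(lra) ltac:(lra) ltac:(lra)). nra.
  - pose proof (Hmin s ltac:(lra)). lra.
  - pose proof (convex_on_chord c b s ltac:(lra) ltac:(lra) ltac:(lra)). nra.
Qed.

End ConvexFunction.

Lemma strictly_convex_on_valley_at_min m : strictly_convex_on f ->
  lo < m < hi -> (forall s, lo < s < hi -> f m <= f s) ->
  unbounded_left f -> unbounded_right f -> valley m f.
Proof.
  intros Hf Hm Hmin Hl Hr.
  pose proof (strictly_convex_on_convex_on Hf) as Hc.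
  assert (Hstrict : forall s, lo < s < hi -> s <> m -> f m < f s).
  { intros s Hs Hsm.
    pose proof (Hf s m (1 / 2) Hs Hm Hsm ltac:(lra)).
    pose proof (Hmin (1 / 2 * s + (1 - 1 / 2) * m) ltac:(lra)). lra. }
  split; auto.
  - intros x Hx. exact (convex_on_continuity_pt Hc x Hx).
  - intros x y Hx Hxy.
    pose proof (convex_on_chord Hc x y m Hx ltac:(lra) ltac:(lra)).
    pose proof (Hstrict x ltac:(lra) ltac:(lra)). nra.
  - intros x y Hxy Hy.
    pose proof (convex_on_chord Hc m x y ltac:(lra) ltac:(lra) Hy).
    pose proof (Hstrict y ltac:(lra) ltac:(lra)). nra.
Qed.

Lemma strictly_convex_on_valley : lo < hi -> strictly_convex_on f ->
  unbounded_left f -> unbounded_right f -> exists m, valley m f.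
Proof.
  intros Hlh Hf Hl Hr.
  set (c := (lo + hi) / 2).
  destruct (Hl (f c) c ltac:(unfold c; lra)) as (a & Ha & Hfa).
  destruct (Hr (f c) c ltac:(unfold c; lra)) as (b & Hb & Hfb).
  destruct (convex_on_argmin (strictly_convex_on_convex_on Hf) a c b)
    as (m & Hm & Hmin); try lra.
  exists m. apply strictly_convex_on_valley_at_min; auto.
Qed.

End Convexity.

Arguments valley_mid {lo hi m f}.
Arguments valley_continuous {lo hi m f}.
Arguments valley_decreasing {lo hi m f}.
Arguments valley_increasing {lo hi m f}.
Arguments valley_unbounded_left {lo hi m f}.
Arguments valley_unbounded_right {lo hi m f}.

Section Superlevel.
Context {lo hi m : R} {f : R -> R}.
Hypothesis Hv : valley lo hi m f.

Lemma valley_min s : lo < s < hi -> f m <= f s.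
Proof.
  intros Hs. destruct (Rtotal_order s m) as [Hsm|[->|Hms]].
  - left; apply (valley_decreasing Hv); lra.
  - lra.
  - left; apply (valley_increasing Hv); lra.
Qed.

Lemma superlevel_below_min c s : c < f m ->
  (lo < s < hi /\ c < f s) <-> lo < s < hi.
Proof.
  intros Hc. split; [tauto|]. intros Hs. split; auto.
  pose proof (valley_min s Hs). lra.
Qed.

Lemma superlevel_at_min s :
  (lo < s < hi /\ f m < f s) <-> (lo < s < hi /\ s <> m).
Proof.
  split; intros [Hs H]; split; auto.
  - intros ->. lra.
  - destruct (Rtotal_order s m) as [Hsm|[Hsm|Hms]].
    + apply (valley_decreasing Hv); lra.
    + contradiction.
    + apply (valley_increasing Hv); lra.
Qed.

Lemma superlevel_above_min c : f m < c ->
  exists s0 s1, lo < s0 < m /\ m < s1 < hi /\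
    forall s, (lo < s < hi /\ c < f s) <-> (lo < s < s0 \/ s1 < s < hi).
Proof.
  intros Hc. destruct (valley_mid Hv) as [Hlo Hhi].
  destruct (valley_unbounded_left Hv c m ltac:(lra)) as (a & Ha & Hfa).
  destruct (valley_unbounded_right Hv c m ltac:(lra)) as (b & Hb & Hfb).
  assert (Hcont : forall x, lo < x < hi -> continuity_pt (fun y => f y - c) x).
  { intros x Hx. apply (continuity_pt_minus f (fct_cte c)).
    - apply (valley_continuous Hv); auto.
    - apply continuity_pt_const. intros ? ?; reflexivity. }
  destruct (IVT_interv (fun y => - (f y - c)) a m) as (s0 & Hs0 & E0); try lra.
  { intros x Hx. apply continuity_pt_opp, Hcont; lra. }
  destruct (IVT_interv (fun y => f y - c) m b) as (s1 & Hs1 & E1); try lra.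
  { intros x Hx. apply Hcont; lra. }
  assert (Hs0m : s0 <> m) by (intros ->; lra).
  assert (Hs1m : s1 <> m) by (intros ->; lra).
  exists s0, s1. split; [lra|]. split; [lra|]. intros s. split.
  - intros [Hs Hfs].
    destruct (Rlt_le_dec s s0) as [?|H0]; [left; lra|].
    destruct (Rlt_le_dec s1 s) as [?|H1]; [right; lra|].
    exfalso. destruct (Rle_lt_dec s m) as [Hsm|Hms].
    + destruct (Req_dec s s0) as [->|Hne]; [lra|].
      pose proof (valley_decreasing Hv s0 s ltac:(lra) ltac:(lra)). lra.
    + destruct (Req_dec s s1) as [->|Hne]; [lra|].
      pose proof (valley_increasing Hv s s1 ltac:(lra) ltac:(lra)). lra.
  - intros [Hs|Hs]; split; try lra.
    + pose proof (valley_decreasing Hv s s0 ltac:(lra) ltac:(lra)). lra.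
    + pose proof (valley_increasing Hv s1 s ltac:(lra) ltac:(lra)). lra.
Qed.

End Superlevel.

(** * Inverse functions and backward uniqueness *)

Lemma is_derive_continuity_pt (f : R -> R) x l : is_derive f x l -> continuity_pt f x.
Proof.
  intros Hf. apply continuity_pt_filterlim, (@ex_derive_continuous R_AbsRing R_NormedModule).
  now exists l.
Qed.

(* Meaningful only on the range of [f]; elsewhere an arbitrary value. *)
Definition inv_fun (f : R -> R) (y : R) : R :=
  epsilon (inhabits 0) (fun x => f x = y).

Section InverseFunction.
Variables f f' : R -> R.
Hypothesis f_derive : forall x, is_derive f x (f' x).
Hypothesis f'_pos : forall x, 0 < f' x.

Lemma derive_pos_lt_iff x y : f x < f y <-> x < y.
Proof.
  split; intros Hxy.
  - destruct (Rtotal_order x y) as [?|[->|Hyx]]; auto; [lra|].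
    destruct (MVT_gen f y x f') as (c & _ & Hc).
    + intros; apply f_derive.
    + intros; eapply is_derive_continuity_pt, f_derive.
    + pose proof (f'_pos c). nra.
  - destruct (MVT_gen f x y f') as (c & _ & Hc).
    + intros; apply f_derive.
    + intros; eapply is_derive_continuity_pt, f_derive.
    + pose proof (f'_pos c). nra.
Qed.

Lemma inv_fun_cancel x : inv_fun f (f x) = x.
Proof.
  assert (E : f (inv_fun f (f x)) = f x).
  { apply (epsilon_spec (inhabits 0) (fun z => f z = f x)). now exists x. }
  destruct (Rtotal_order (inv_fun f (f x)) x) as [H|[H|H]]; auto;
    apply derive_pos_lt_iff in H; lra.
Qed.

Lemma f_inv_fun a b y : f a <= y <= f b -> f (inv_fun f y) = y.
Proof.
  intros Hy.
  destruct (IVT_gen f a b y (fun x => is_derive_continuity_pt f x _ (f_derive x))) as (x & _ & <-).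
  - rewrite Rmin_left, Rmax_right; lra.
  - now rewrite inv_fun_cancel.
Qed.

Lemma is_derive_inv_fun a b y : a < b -> f a < y < f b ->
  is_derive (inv_fun f) y (/ f' (inv_fun f y)).
Proof.
  intros Hab Hy.
  set (g := inv_fun f).
  assert (Hf : forall x0, f a <= x0 <= f b -> f (g x0) = x0).
  { intros x0 Hx0. exact (f_inv_fun a b x0 Hx0). }
  assert (Hg : forall x0, f a <= x0 <= f b -> a <= g x0 <= b).
  { intros x0 Hx0. rewrite <- (Hf x0 Hx0) in Hx0.
    split; apply Rnot_lt_le; intros H; apply derive_pos_lt_iff in H; lra. }
  assert (Hd : forall x0, derivable_pt f x0).
  { intros x0. exists (f' x0). apply is_derive_Reals, f_derive. }
  assert (Hgy : g (f a) <= g y <= g (f b)).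
  { unfold g. rewrite !inv_fun_cancel. apply Hg. lra. }
  assert (Hcont : continuity_pt g y).
  { apply (continuity_pt_recip_interv f g a b); [exact Hab| | | | |exact Hy].
    - intros x z _ Hxz _. apply derive_pos_lt_iff; lra.
    - intros x0 H1 H2. unfold comp, id. apply Hf; lra.
    - intros x0 H1 H2. apply Hg; lra.
    - intros; eapply is_derive_continuity_pt, f_derive. }
  assert (Ed : derive_pt f (g y) (Hd (g y)) = f' (g y)).
  { apply derive_pt_eq_0, is_derive_Reals, f_derive. }
  pose proof (derivable_pt_lim_recip_interv f g (f a) (f b) y (fun x0 _ => Hd x0)
    Hcont ltac:(lra) Hy Hgy (fun x0 Hx0 => Hf x0 Hx0)) as Hlim.
  cbv beta in Hlim. rewrite Ed in Hlim.
  apply is_derive_Reals. unfold Rdiv in Hlim. rewrite Rmult_1_l in Hlim.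
  apply Hlim. pose proof (f'_pos (g y)). lra.
Qed.

End InverseFunction.

Lemma backward_gronwall_zero (D D' : R -> R) (K a b : R) :
  (forall t, a <= t <= b -> is_derive D t (D' t)) ->
  (forall t, a <= t <= b -> 0 <= D t) ->
  (forall t, a <= t <= b -> - K * D t <= D' t) ->
  D b = 0 -> forall t, a <= t <= b -> D t = 0.
Proof.
  intros HD Hpos Hbound Hb t Ht.
  set (F := fun t => D t * exp (K * t)).
  assert (HF : forall x, a <= x <= b -> is_derive F x ((D' x + K * D x) * exp (K * x))).
  { intros x Hx. unfold F. auto_derive.
    - now exists (D' x); apply HD.
    - rewrite (is_derive_unique (fun x : R => D x) x (D' x) (HD x Hx)). ring. }
  assert (HFt : F t <= 0).
  { destruct (Req_dec t b) as [->|Htb].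
    { unfold F. rewrite Hb. lra. }
    destruct (MVT_gen F t b (fun x => (D' x + K * D x) * exp (K * x))) as (c & Hc & E).
    - intros x Hx. rewrite Rmin_left, Rmax_right in Hx by lra. apply HF; lra.
    - intros x Hx. rewrite Rmin_left, Rmax_right in Hx by lra.
      eapply is_derive_continuity_pt, HF; lra.
    - rewrite Rmin_left, Rmax_right in Hc by lra.
      assert (0 <= (D' c + K * D c) * exp (K * c)).
      { apply Rmult_le_pos; [|apply Rlt_le, exp_pos].
        pose proof (Hbound c ltac:(lra)). lra. }
      unfold F in E |- *. rewrite Hb in E. nra. }
  pose proof (Hpos t Ht). pose proof (exp_pos (K * t)). unfold F in HFt. nra.
Qed.

Definition lipschitz_on_bounded (f : R -> R) : Prop :=
  forall M, exists L, forall x y, Rabs x <= M -> Rabs y <= M ->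
    Rabs (f x - f y) <= L * Rabs (x - y).

Lemma energy_derivative_lower_bound du dv df L : Rabs df <= L * Rabs du ->
  - (2 + L ^ 2) * (du ^ 2 + dv ^ 2) <= 2 * du * dv + 2 * dv * df.
Proof.
  intros Hd.
  assert (Hsq : df ^ 2 <= L ^ 2 * du ^ 2).
  { rewrite <- (pow2_abs df), <- (pow2_abs du). pose proof (Rabs_pos df). nra. }
  pose proof (pow2_ge_0 (du + dv)). pose proof (pow2_ge_0 (dv + df)).
  pose proof (pow2_ge_0 du). pose proof (Rmult_le_pos _ _ (pow2_ge_0 L) (pow2_ge_0 dv)).
  nra.
Qed.

Lemma second_order_backward_uniqueness (f : R -> R) (a b : R) (u1 v1 u2 v2 : R -> R) :
  lipschitz_on_bounded f -> a <= b ->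
  (forall t, a <= t <= b -> is_derive u1 t (v1 t) /\ is_derive v1 t (f (u1 t))) ->
  (forall t, a <= t <= b -> is_derive u2 t (v2 t) /\ is_derive v2 t (f (u2 t))) ->
  u1 b = u2 b -> v1 b = v2 b ->
  forall t, a <= t <= b -> u1 t = u2 t /\ v1 t = v2 t.
Proof.
  intros Hf Hab H1 H2 Eu Ev.
  destruct (continuity_ab_maj (fun t => Rabs (u1 t) + Rabs (u2 t)) a b Hab)
    as (tM & HM & _).
  { intros t Ht. destruct (H1 t Ht) as [Hu1 _], (H2 t Ht) as [Hu2 _].
    apply continuity_pt_plus; apply (continuity_pt_comp _ Rabs);
      [eapply is_derive_continuity_pt; eauto | apply Rcontinuity_abs
      |eapply is_derive_continuity_pt; eauto | apply Rcontinuity_abs]. }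
  destruct (Hf (Rabs (u1 tM) + Rabs (u2 tM))) as (L & HL).
  set (D := fun t => (u1 t - u2 t) ^ 2 + (v1 t - v2 t) ^ 2).
  assert (HD : forall t, a <= t <= b -> D t = 0).
  { apply (backward_gronwall_zero D (fun t => 2 * (u1 t - u2 t) * (v1 t - v2 t)
      + 2 * (v1 t - v2 t) * (f (u1 t) - f (u2 t))) (2 + L ^ 2)).
    - intros t Ht. destruct (H1 t Ht) as [Hu1 Hv1], (H2 t Ht) as [Hu2 Hv2].
      unfold D. auto_derive.
      + repeat split; eexists; eauto.
      + rewrite (is_derive_unique (fun x : R => u1 x) t _ Hu1),
          (is_derive_unique (fun x : R => u2 x) t _ Hu2),
          (is_derive_unique (fun x : R => v1 x) t _ Hv1),
          (is_derive_unique (fun x : R => v2 x) t _ Hv2).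
        ring.
    - intros t _. unfold D. pose proof (pow2_ge_0 (u1 t - u2 t)).
      pose proof (pow2_ge_0 (v1 t - v2 t)). lra.
    - intros t Ht. unfold D. cbv beta.
      pose proof (HM t Ht) as HMt. cbv beta in HMt.
      assert (Hd := HL (u1 t) (u2 t) ltac:(pose proof (Rabs_pos (u2 t)); lra)
        ltac:(pose proof (Rabs_pos (u1 t)); lra)).
      exact (energy_derivative_lower_bound _ _ _ _ Hd).
    - unfold D. rewrite Eu, Ev. ring. }
  intros t Ht. specialize (HD t Ht). unfold D in HD.
  pose proof (pow2_ge_0 (u1 t - u2 t)). pose proof (pow2_ge_0 (v1 t - v2 t)).
  split; apply Rminus_diag_uniq, Rsqr_0_uniq; unfold Rsqr; nra.
Qed.

(** * The time integral [H] *)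

(* [G s - G (s (1 - y^2)) = s^3 y^2 Q s y], so along the level line
   [v = sqrt (2 lam s^3) y sqrt (Q s y)] and [dt = du / v] becomes
   [sqrt (2 / lam) dy / sqrt (s Q s y)] up to orientation. *)
Definition Q (s y : R) : R :=
  (1 + (1 - y ^ 2) + (1 - y ^ 2) ^ 2) / 3
  - s * (2 - y ^ 2) * (1 + (1 - y ^ 2) ^ 2) / 4.

Definition psi (s y : R) : R := / sqrt (s * Q s y).

Definition H (s : R) : R := RInt (psi s) 0 1.

Lemma sQ_pos s y : 0 < s < 1 -> 0 < s * Q s y.
Proof.
  intros Hs. apply Rmult_lt_0_compat; [lra|].
  set (w := 1 - y ^ 2).
  replace (Q s y) with
    ((1 - s) * (1 + w + w ^ 2) / 3 + s * y ^ 2 * (3 * w ^ 2 + 2 * w + 1) / 12)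
    by (unfold Q, w; field).
  assert (0 < 1 + w + w ^ 2) by nra.
  assert (0 <= s * y ^ 2 * (3 * w ^ 2 + 2 * w + 1)).
  { apply Rmult_le_pos; [apply Rmult_le_pos; [lra | apply pow2_ge_0] | nra]. }
  nra.
Qed.

Lemma psi_pos s y : 0 < s < 1 -> 0 < psi s y.
Proof. intros Hs. apply Rinv_0_lt_compat, sqrt_lt_R0, sQ_pos, Hs. Qed.

Lemma ex_derive_psi s y : 0 < s < 1 -> ex_derive (psi s) y.
Proof.
  intros Hs. pose proof (sQ_pos s y Hs).
  unfold psi, Q in *. auto_derive. repeat split; auto; try lra.
  apply Rgt_not_eq, sqrt_lt_R0. lra.
Qed.

Lemma psi_continuous s y : 0 < s < 1 -> continuous (psi s) y.
Proof.
  intros Hs. apply (@ex_derive_continuous R_AbsRing R_NormedModule), ex_derive_psi, Hs.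
Qed.

Lemma ex_RInt_psi s a b : 0 < s < 1 -> ex_RInt (psi s) a b.
Proof.
  intros Hs. apply (@ex_RInt_continuous R_CompleteNormedModule).
  intros; apply psi_continuous, Hs.
Qed.

Lemma inv_sqrt_tangent x z : 0 < x -> 0 < z ->
  / sqrt z - (x - z) / (2 * z * sqrt z) <= / sqrt x.
Proof.
  intros Hx Hz.
  pose proof (sqrt_lt_R0 _ Hx) as HX. pose proof (sqrt_lt_R0 _ Hz) as HZ.
  pose proof (sqrt_sqrt x (Rlt_le _ _ Hx)) as EX.
  pose proof (sqrt_sqrt z (Rlt_le _ _ Hz)) as EZ.
  set (X := sqrt x) in *. set (Z := sqrt z) in *.
  rewrite <- EX, <- EZ.
  assert (E : / X - (/ Z - (X * X - Z * Z) / (2 * (Z * Z) * Z)) =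
              (X - Z) ^ 2 * (X + 2 * Z) / (2 * X * Z ^ 3)) by (field; lra).
  assert (0 <= (X - Z) ^ 2 * (X + 2 * Z) / (2 * X * Z ^ 3)).
  { apply Rdiv_le_0_compat; [apply Rmult_le_pos; [apply pow2_ge_0 | lra]|].
    pose proof (pow_lt Z 3 HZ). nra. }
  lra.
Qed.

Lemma inv_sqrt_convex x1 x2 t : 0 < x1 -> 0 < x2 -> 0 <= t <= 1 ->
  / sqrt (t * x1 + (1 - t) * x2) <= t / sqrt x1 + (1 - t) / sqrt x2.
Proof.
  intros H1 H2 Ht.
  set (z := t * x1 + (1 - t) * x2).
  assert (Hz : 0 < z) by (unfold z; nra).
  pose proof (sqrt_lt_R0 _ Hz).
  pose proof (inv_sqrt_tangent x1 z H1 Hz) as T1.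
  pose proof (inv_sqrt_tangent x2 z H2 Hz) as T2.
  assert (E : t * (/ sqrt z - (x1 - z) / (2 * z * sqrt z))
            + (1 - t) * (/ sqrt z - (x2 - z) / (2 * z * sqrt z))
            = / sqrt z - (t * x1 + (1 - t) * x2 - z) / (2 * z * sqrt z))
    by (field; lra).
  replace (t * x1 + (1 - t) * x2 - z) with 0 in E by (unfold z; ring).
  change (/ sqrt z <= t * / sqrt x1 + (1 - t) * / sqrt x2). nra.
Qed.

Lemma sQ_concavity_gap s1 s2 t y :
  (t * s1 + (1 - t) * s2) * Q (t * s1 + (1 - t) * s2) y
  - (t * (s1 * Q s1 y) + (1 - t) * (s2 * Q s2 y))
  = t * (1 - t) * (s1 - s2) ^ 2 * ((2 - y ^ 2) * (1 + (1 - y ^ 2) ^ 2) / 4).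
Proof. unfold Q. field. Qed.

Lemma psi_strictly_convex y : 0 <= y <= 1 -> strictly_convex_on 0 1 (fun s => psi s y).
Proof.
  intros Hy s1 s2 t H1 H2 Hne Ht. cbv beta.
  pose proof (sQ_pos s1 y H1). pose proof (sQ_pos s2 y H2).
  assert (Hgap : t * (s1 * Q s1 y) + (1 - t) * (s2 * Q s2 y)
                 < (t * s1 + (1 - t) * s2) * Q (t * s1 + (1 - t) * s2) y).
  { pose proof (sQ_concavity_gap s1 s2 t y) as E.
    assert (0 < (s1 - s2) ^ 2) by (rewrite <- Rsqr_pow2; apply Rsqr_pos_lt; lra).
    assert (0 < (2 - y ^ 2) * (1 + (1 - y ^ 2) ^ 2) / 4).
    { apply Rdiv_lt_0_compat; [apply Rmult_lt_0_compat|]; nra. }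
    assert (0 < t * (1 - t)) by nra.
    assert (0 < t * (1 - t) * (s1 - s2) ^ 2) by nra.
    nra. }
  unfold psi.
  apply Rlt_le_trans with (/ sqrt (t * (s1 * Q s1 y) + (1 - t) * (s2 * Q s2 y))).
  - apply Rinv_lt_contravar.
    + apply Rmult_lt_0_compat; apply sqrt_lt_R0; nra.
    + apply sqrt_lt_1; nra.
  - apply inv_sqrt_convex; lra.
Qed.

Lemma H_strictly_convex : strictly_convex_on 0 1 H.
Proof.
  intros s1 s2 t H1 H2 Hne Ht.
  assert (Hm : 0 < t * s1 + (1 - t) * s2 < 1) by (split; nra).
  assert (HI : is_RInt (fun y => t * psi s1 y + (1 - t) * psi s2 y) 0 1
                 (t * H s1 + (1 - t) * H s2)).
  { apply (is_RInt_plus (V := R_NormedModule)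
      (fun y => t * psi s1 y) (fun y => (1 - t) * psi s2 y));
      apply (is_RInt_scal (V := R_NormedModule)), (RInt_correct (V := R_CompleteNormedModule)),
      ex_RInt_psi; assumption. }
  rewrite <- (is_RInt_unique _ _ _ _ HI).
  apply RInt_lt; [lra | | |].
  - intros y _. apply (@ex_derive_continuous R_AbsRing R_NormedModule).
    apply (ex_derive_plus (K := R_AbsRing) (V := R_NormedModule)
      (fun y => t * psi s1 y) (fun y => (1 - t) * psi s2 y));
      apply ex_derive_scal, ex_derive_psi; assumption.
  - intros y _. apply psi_continuous, Hm.
  - intros y Hy. apply (psi_strictly_convex y); lra.
Qed.

Lemma H_ge_inv_sqrt s : 0 < s < 1 -> / sqrt s <= H s.
Proof.
  intros Hs.
  replace (/ sqrt s) with (RInt (fun _ => / sqrt s) 0 1)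
    by (rewrite RInt_const; unfold scal; simpl; unfold mult; simpl; ring).
  apply RInt_le; [lra | apply ex_RInt_const | apply ex_RInt_psi, Hs |].
  intros y Hy. pose proof (sQ_pos s y Hs).
  apply Rinv_le_contravar; [apply sqrt_lt_R0; lra|].
  apply sqrt_le_1; [lra | lra |].
  assert (Q s y <= 1).
  { unfold Q. assert (0 < 2 - y ^ 2) by nra.
    assert (0 <= s * (2 - y ^ 2) * (1 + (1 - y ^ 2) ^ 2) / 4).
    { apply Rdiv_le_0_compat; [|lra]. apply Rmult_le_pos; [nra | nra]. }
    nra. }
  nra.
Qed.

Lemma H_pos s : 0 < s < 1 -> 0 < H s.
Proof.
  intros Hs. eapply Rlt_le_trans; [|apply H_ge_inv_sqrt, Hs].
  apply Rinv_0_lt_compat, sqrt_lt_R0; lra.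
Qed.

Lemma sQ_le s y : 0 < s < 1 -> 0 <= y <= 1 -> s * Q s y <= y ^ 2 / 2 + (1 - s).
Proof.
  intros Hs Hy. set (w := 1 - y ^ 2).
  replace (s * Q s y) with
    (s * (y ^ 2 * (3 * w ^ 2 + 2 * w + 1) / 12 + (1 - s) * ((1 + w) * (1 + w ^ 2)) / 4))
    by (unfold Q, w; field).
  assert (0 <= w <= 1) by (unfold w; nra).
  assert (0 <= y ^ 2 * (3 * w ^ 2 + 2 * w + 1) / 12 <= y ^ 2 / 2).
  { assert (3 * w ^ 2 + 2 * w + 1 <= 6) by nra. pose proof (pow2_ge_0 y).
    split; [apply Rdiv_le_0_compat|]; nra. }
  assert (0 <= (1 - s) * ((1 + w) * (1 + w ^ 2)) / 4 <= 1 - s).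
  { assert ((1 + w) * (1 + w ^ 2) <= 4) by nra.
    split; [apply Rdiv_le_0_compat; [apply Rmult_le_pos|]|]; nra. }
  nra.
Qed.

Lemma H_ge_ln s : 0 < s < 1 -> - ln (sqrt (1 - s)) <= H s.
Proof.
  intros Hs. set (e := sqrt (1 - s)).
  assert (He : 0 < e) by (apply sqrt_lt_R0; lra).
  assert (Ee : e * e = 1 - s) by (apply sqrt_sqrt; lra).
  assert (HI : is_RInt (fun y => / (y + e)) 0 1 (ln (1 + e) - ln (0 + e))).
  { apply (is_RInt_derive (V := R_CompleteNormedModule) (fun y => ln (y + e))).
    - intros y Hy. rewrite Rmin_left, Rmax_right in Hy by lra.
      auto_derive; [lra | field; lra].
    - intros y Hy. rewrite Rmin_left, Rmax_right in Hy by lra.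
      apply (@ex_derive_continuous R_AbsRing R_NormedModule).
      auto_derive. lra. }
  assert (0 <= ln (1 + e)) by (rewrite <- ln_1; apply ln_le; lra).
  replace (0 + e) with e in HI by ring.
  apply Rle_trans with (ln (1 + e) - ln e); [lra|].
  rewrite <- (is_RInt_unique _ _ _ _ HI).
  apply RInt_le; [lra | eexists; eassumption | apply ex_RInt_psi, Hs |].
  intros y Hy. pose proof (sQ_pos s y Hs).
  apply Rinv_le_contravar; [apply sqrt_lt_R0; lra|].
  rewrite <- (sqrt_pow2 (y + e)) by lra.
  apply sqrt_le_1; [lra | nra |].
  pose proof (sQ_le s y Hs ltac:(lra)). nra.
Qed.

Lemma H_unbounded_left : unbounded_left 0 1 H.
Proof.
  intros M x Hx.
  set (k := Rabs M + 1).
  assert (Hk : 0 < k) by (pose proof (Rabs_pos M); unfold k; lra).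
  set (a := Rmin (x / 2) ((/ k) ^ 2)).
  assert (Ha : 0 < a) by (apply Rmin_pos; [lra | apply pow_lt, Rinv_0_lt_compat, Hk]).
  assert (Hax : a <= x / 2) by apply Rmin_l.
  exists a. split; [lra|].
  apply Rlt_le_trans with (/ sqrt a); [|apply H_ge_inv_sqrt; lra].
  assert (Hsa : sqrt a <= / k).
  { rewrite <- (sqrt_pow2 (/ k)) by (apply Rlt_le, Rinv_0_lt_compat, Hk).
    apply sqrt_le_1_alt, Rmin_r. }
  apply Rlt_le_trans with k; [unfold k; pose proof (Rle_abs M); lra|].
  rewrite <- (Rinv_inv k). apply Rinv_le_contravar; [apply sqrt_lt_R0; lra | exact Hsa].
Qed.

Lemma H_unbounded_right : unbounded_right 0 1 H.
Proof.
  intros M x Hx.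
  set (E := exp (- M)).
  assert (HE : 0 < E) by apply exp_pos.
  set (b := Rmax ((1 + x) / 2) (1 - E ^ 2 / 2)).
  assert (Hxb : (1 + x) / 2 <= b) by apply Rmax_l.
  assert (HEb : 1 - E ^ 2 / 2 <= b) by apply Rmax_r.
  assert (Hb1 : b < 1) by (apply Rmax_lub_lt; nra).
  exists b. split; [lra|].
  apply Rlt_le_trans with (- ln (sqrt (1 - b))); [|apply H_ge_ln; lra].
  assert (sqrt (1 - b) < E).
  { rewrite <- (sqrt_pow2 E) by lra. apply sqrt_lt_1; nra. }
  assert (ln (sqrt (1 - b)) < - M).
  { rewrite <- (ln_exp (- M)). apply ln_increasing; [apply sqrt_lt_R0; lra | assumption]. }
  lra.
Qed.

Lemma H_valley : exists m, valley 0 1 m H.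
Proof.
  apply strictly_convex_on_valley;
    [lra | exact H_strictly_convex | exact H_unbounded_left | exact H_unbounded_right].
Qed.

(** * The explicit solution *)

Lemma is_derive_mul_sqrt (P : R -> R) y dP : is_derive P y dP -> 0 < P y ->
  is_derive (fun y => y * sqrt (P y)) y ((2 * P y + y * dP) / (2 * sqrt (P y))).
Proof.
  intros HP Hpos.
  pose proof (sqrt_lt_R0 _ Hpos). pose proof (sqrt_sqrt _ (Rlt_le _ _ Hpos)) as E.
  auto_derive.
  - split; [now exists dP | auto].
  - rewrite (is_derive_unique (fun x : R => P x) y dP HP).
    set (r := sqrt (P y)) in *. rewrite <- E. field. lra.
Qed.

(* [y_sol] undoes the substitution: going backward from [t = 1], where [y = 0]
   and [u = s], it reaches [y = 1], i.e. [u = 0], at [t = 1 - tau 1]. *)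
Section ExplicitSolution.
Variables lam s : R.
Hypothesis Hlam : 0 < lam.
Hypothesis Hs : 0 < s < 1.

Definition tau (x : R) : R := sqrt (2 / lam) * RInt (psi s) 0 x.

Definition y_sol (t : R) : R := inv_fun tau (1 - t).

Definition u_sol (t : R) : R := s * (1 - y_sol t ^ 2).

Definition v_sol (t : R) : R := 2 * s / sqrt (2 / lam) * (y_sol t * sqrt (s * Q s (y_sol t))).

Lemma sqrt_2_lam_pos : 0 < sqrt (2 / lam).
Proof. apply sqrt_lt_R0, Rdiv_lt_0_compat; lra. Qed.

Lemma tau_derive x : is_derive tau x (sqrt (2 / lam) * psi s x).
Proof.
  apply is_derive_scal, (is_derive_RInt (psi s) (fun b => RInt (psi s) 0 b) 0).
  - apply filter_forall. intros b.
    apply (RInt_correct (V := R_CompleteNormedModule)), ex_RInt_psi, Hs.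
  - apply psi_continuous, Hs.
Qed.

Lemma tau_derive_pos x : 0 < sqrt (2 / lam) * psi s x.
Proof. apply Rmult_lt_0_compat; [apply sqrt_2_lam_pos | apply psi_pos, Hs]. Qed.

Lemma tau_lt_iff x y : tau x < tau y <-> x < y.
Proof. exact (derive_pos_lt_iff tau _ tau_derive tau_derive_pos x y). Qed.

Lemma tau_0 : tau 0 = 0.
Proof. unfold tau. rewrite RInt_point. apply Rmult_0_r. Qed.

Lemma y_sol_tau x : y_sol (1 - tau x) = x.
Proof.
  unfold y_sol. replace (1 - (1 - tau x)) with (tau x) by ring.
  exact (inv_fun_cancel tau _ tau_derive tau_derive_pos x).
Qed.

Lemma tau_y_sol t : 1 - tau 2 <= t <= 1 - tau (-1) -> tau (y_sol t) = 1 - t.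
Proof.
  intros Ht. apply (f_inv_fun tau _ tau_derive tau_derive_pos (-1) 2). lra.
Qed.

Lemma y_sol_derive t : 1 - tau 2 < t < 1 - tau (-1) ->
  is_derive y_sol t (- sqrt (s * Q s (y_sol t)) / sqrt (2 / lam)).
Proof.
  intros Ht. pose proof (sqrt_lt_R0 _ (sQ_pos s (y_sol t) Hs)). pose proof sqrt_2_lam_pos.
  replace (- sqrt (s * Q s (y_sol t)) / sqrt (2 / lam))
    with (-1 * / (sqrt (2 / lam) * psi s (inv_fun tau (1 - t))))
    by (unfold psi, y_sol in *; field; split; lra).
  apply (is_derive_comp (inv_fun tau) (fun t => 1 - t)).
  - apply (is_derive_inv_fun tau _ tau_derive tau_derive_pos (-1) 2); lra.
  - auto_derive; [auto | ring].
Qed.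

Lemma u_sol_derive t : 1 - tau 2 < t < 1 - tau (-1) -> is_derive u_sol t (v_sol t).
Proof.
  intros Ht. pose proof sqrt_2_lam_pos.
  replace (v_sol t) with (- sqrt (s * Q s (y_sol t)) / sqrt (2 / lam) * (- 2 * s * y_sol t))
    by (unfold v_sol; field; lra).
  apply (is_derive_comp (fun y => s * (1 - y ^ 2)) y_sol); [|exact (y_sol_derive t Ht)].
  auto_derive; [auto | ring].
Qed.

(* [2 P + y P' = 2 s w^2 (1 - s w)] for [P = s Q s] and [w = 1 - y^2] is what
   turns [v'] into [- lam g (s w)]. *)
Lemma v_sol_derive t : 1 - tau 2 < t < 1 - tau (-1) -> is_derive v_sol t (- lam * g (u_sol t)).
Proof.
  intros Ht. pose proof (y_sol_derive t Ht) as HY. pose proof sqrt_2_lam_pos as Hc.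
  unfold v_sol, u_sol. set (y := y_sol t) in *.
  set (dP := s * (- 2 * y * ((1 + 2 * (1 - y ^ 2)) / 3
                             - s * (1 + 2 * (1 - y ^ 2) + 3 * (1 - y ^ 2) ^ 2) / 4))).
  assert (HV : is_derive (fun y => y * sqrt (s * Q s y)) y
                 ((2 * (s * Q s y) + y * dP) / (2 * sqrt (s * Q s y)))).
  { apply (is_derive_mul_sqrt (fun y => s * Q s y)); [|apply sQ_pos, Hs].
    unfold Q, dP. auto_derive; [auto | field]. }
  pose proof (sqrt_lt_R0 _ (sQ_pos s y Hs)) as Hr.
  pose proof (sqrt_sqrt (2 / lam) ltac:(apply Rlt_le, Rdiv_lt_0_compat; lra)) as Ec.
  replace (- lam * g (s * (1 - y ^ 2))) with
    (- sqrt (s * Q s y) / sqrt (2 / lam)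
     * (2 * s / sqrt (2 / lam) * ((2 * (s * Q s y) + y * dP) / (2 * sqrt (s * Q s y))))).
  { apply (is_derive_comp (fun y => 2 * s / sqrt (2 / lam) * (y * sqrt (s * Q s y))) y_sol);
      [apply is_derive_scal, HV | exact HY]. }
  set (c := sqrt (2 / lam)) in *. set (r := sqrt (s * Q s y)) in *.
  transitivity (- (2 * s / (c * c)) * ((2 * (s * Q s y) + y * dP) / 2)); [field; lra|].
  rewrite Ec. unfold g, Q, dP. field. lra.
Qed.

Lemma hatT0_is_explicit : hatT0_is lam s (sqrt (2 / lam) * H s).
Proof.
  change (sqrt (2 / lam) * H s) with (tau 1).
  assert (Htau : tau (-1) < tau 0 < tau 1 /\ tau 1 < tau 2).
  { split; [split|]; apply tau_lt_iff; lra. }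
  rewrite tau_0 in Htau.
  pose proof (y_sol_tau 0) as Y1. rewrite tau_0, Rminus_0_r in Y1.
  pose proof (y_sol_tau 1) as YT.
  split; [lra|]. exists u_sol, v_sol.
  split; [|split; [|split; [|split; [|split]]]].
  - intros t Ht. split; [apply u_sol_derive | apply v_sol_derive]; lra.
  - unfold u_sol. rewrite Y1. ring.
  - unfold v_sol. rewrite Y1. ring.
  - unfold u_sol. rewrite YT. ring.
  - unfold v_sol. rewrite YT.
    pose proof (sqrt_lt_R0 _ (sQ_pos s 1 Hs)). pose proof sqrt_2_lam_pos.
    apply Rmult_lt_0_compat; [apply Rdiv_lt_0_compat|]; lra.
  - intros t Ht [Hu _].
    pose proof (tau_y_sol t ltac:(lra)) as E.
    assert (0 <= y_sol t).
    { apply Rnot_lt_le. intros Hneg. apply tau_lt_iff in Hneg. rewrite tau_0 in Hneg. lra. }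
    assert (y_sol t < 1) by (apply tau_lt_iff; lra).
    assert (Hw : 0 < 1 - y_sol t ^ 2) by nra.
    unfold u_sol in Hu. pose proof (Rmult_lt_0_compat _ _ (proj1 Hs) Hw). lra.
Qed.

End ExplicitSolution.

(** * Characterisation of [I1] *)

Lemma minus_lam_g_lipschitz lam : lipschitz_on_bounded (fun x => - lam * g x).
Proof.
  intros M. exists (Rabs lam * (2 * M + 3 * M ^ 2)). intros x y Hx Hy.
  replace (- lam * g x - - lam * g y)
    with (- lam * (x + y - (x ^ 2 + x * y + y ^ 2)) * (x - y)) by (unfold g; ring).
  rewrite !Rabs_mult, Rabs_Ropp.
  apply Rmult_le_compat_r; [apply Rabs_pos|].
  apply Rmult_le_compat_l; [apply Rabs_pos|].
  apply Rabs_le_between in Hx. apply Rabs_le_between in Hy.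
  apply Rabs_le_between. split; nra.
Qed.

Lemma hatT0_is_unique lam s T1 T2 :
  hatT0_is lam s T1 -> hatT0_is lam s T2 -> T1 = T2.
Proof.
  assert (Hnlt : forall T1 T2, hatT0_is lam s T1 -> hatT0_is lam s T2 -> ~ T1 < T2).
  { intros T1' T2' [HT1 (u1 & v1 & D1 & U1 & V1 & Z1 & P1 & _)]
                   [_ (u2 & v2 & D2 & U2 & V2 & _ & _ & N2)] Hlt.
    destruct (second_order_backward_uniqueness (fun x => - lam * g x) (1 - T1') 1
      u1 v1 u2 v2 (minus_lam_g_lipschitz lam) ltac:(lra) D1
      (fun t Ht => D2 t ltac:(lra)) (eq_trans U1 (eq_sym U2)) (eq_trans V1 (eq_sym V2))
      (1 - T1') ltac:(lra)) as [Eu Ev].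
    apply (N2 (1 - T1')); [lra|]. rewrite <- Eu, <- Ev. split; assumption. }
  intros H1 H2. pose proof (Hnlt _ _ H1 H2). pose proof (Hnlt _ _ H2 H1). lra.
Qed.

Lemma time_threshold_iff sigma lam x : 0 < lam ->
  sigma < sqrt (2 / lam) * x <-> sigma * sqrt (lam / 2) < x.
Proof.
  intros Hlam.
  assert (Hc : 0 < sqrt (2 / lam)) by (apply sqrt_lt_R0, Rdiv_lt_0_compat; lra).
  assert (Hc' : 0 < sqrt (lam / 2)) by (apply sqrt_lt_R0; lra).
  assert (Hcc : sqrt (2 / lam) * sqrt (lam / 2) = 1).
  { rewrite <- sqrt_mult; [|apply Rlt_le, Rdiv_lt_0_compat; lra | lra].
    replace (2 / lam * (lam / 2)) with 1 by (field; lra). apply sqrt_1. }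
  set (c := sqrt (2 / lam)) in *. set (c' := sqrt (lam / 2)) in *.
  assert (E1 : sigma = sigma * c' * c) by (rewrite Rmult_assoc, (Rmult_comm c'), Hcc; ring).
  assert (E2 : x = c * x * c') by (rewrite (Rmult_comm c), Rmult_assoc, Hcc; ring).
  split; intros Hx; nra.
Qed.

Lemma I1_iff sigma lam s : 0 < lam ->
  I1 sigma lam s <-> 0 < s < 1 /\ sigma * sqrt (lam / 2) < H s.
Proof.
  intros Hlam. unfold I1. split.
  - intros [Hs (T & HT & HsT)]. split; [exact Hs|]. apply time_threshold_iff; [exact Hlam|].
    rewrite <- (hatT0_is_unique lam s T _ HT (hatT0_is_explicit lam s Hlam Hs)). exact HsT.
  - intros [Hs Hlt]. split; [exact Hs|]. exists (sqrt (2 / lam) * H s).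
    split; [apply hatT0_is_explicit; auto | apply time_threshold_iff; auto].
Qed.

Lemma threshold_increasing sigma l1 l2 : 0 < sigma -> 0 <= l1 < l2 ->
  sigma * sqrt (l1 / 2) < sigma * sqrt (l2 / 2).
Proof. intros Hs Hl. apply Rmult_lt_compat_l; [lra | apply sqrt_lt_1; lra]. Qed.

Lemma threshold_at_critical sigma x : 0 < sigma -> 0 < x ->
  sigma * sqrt (2 * (x / sigma) ^ 2 / 2) = x.
Proof.
  intros Hs Hx. replace (2 * (x / sigma) ^ 2 / 2) with ((x / sigma) ^ 2) by (field; lra).
  rewrite sqrt_pow2; [field; lra | apply Rlt_le, Rdiv_lt_0_compat; lra].
Qed.

Theorem proposition2p3 (sigma : R) (Hs : 0 < sigma < 1 / 2) :
  exists lamstar sstar : R,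
    0 < lamstar /\ 0 < sstar < 1 /\
    (forall lam, 0 < lam < lamstar ->
       forall s, I1 sigma lam s <-> 0 < s < 1) /\
    (forall s, I1 sigma lamstar s <-> (0 < s < 1 /\ s <> sstar)) /\
    (forall lam, lamstar < lam ->
       exists s0 s1, 0 < s0 /\ s0 < sstar /\ sstar < s1 /\ s1 < 1 /\
         forall s, I1 sigma lam s <-> (0 < s < s0 \/ s1 < s < 1)).
Proof.
  destruct H_valley as (m & Hv). pose proof (valley_mid Hv) as Hm.
  pose proof (H_pos m Hm) as HHm.
  set (lamstar := 2 * (H m / sigma) ^ 2).
  assert (Hstar : 0 < lamstar).
  { apply Rmult_lt_0_compat; [lra | apply pow_lt, Rdiv_lt_0_compat; lra]. }
  pose proof (threshold_at_critical sigma (H m) ltac:(lra) HHm) as Hthr.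
  fold lamstar in Hthr.
  exists lamstar, m. split; [exact Hstar|]. split; [exact Hm|]. split; [|split].
  - intros lam Hlam s. rewrite I1_iff by lra.
    apply (superlevel_below_min Hv). rewrite <- Hthr. apply threshold_increasing; lra.
  - intros s. rewrite I1_iff, Hthr by lra. apply (superlevel_at_min Hv).
  - intros lam Hlam.
    destruct (superlevel_above_min Hv (sigma * sqrt (lam / 2))) as (s0 & s1 & H0 & H1 & Hiff).
    { rewrite <- Hthr. apply threshold_increasing; lra. }
    exists s0, s1. split; [lra|]. split; [lra|]. split; [lra|]. split; [lra|].
    intros s. rewrite I1_iff by lra. apply Hiff.
Qed.
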